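(* Let $d\ge 3$, $n\ge 2$ be integers. There exists a proper algebraic subvariety $\Sigma(n,d)\subset\mathrm{Sym}(n,d,\mathbb{C})$ such that for each $\mathcal{T}\in\mathrm{Sym}(n,d,\mathbb{C})\setminus\Sigma(n,d)$ the system $$(1)\qquad \mathcal{T}\times\otimes^{d-1}\mathbf{x}=\mathbf{x},\quad \mathbf{x}\in\mathbb{C}^n\setminus\{\mathbf{0}\}$$ has at most $(d-1)^n-1$ distinct solutions, and the solution set is invariant under multiplication by $(d-2)$-th roots of unity. Assume moreover that $\mathcal{T}\in\mathrm{Sym}(n,d)\setminus\Sigma(n,d)$ is real. If $d$ is odd, then the number of distinct real solutions of (1) is at most $\frac{(d-1)^n-1}{d-2}$, and every real solution of $$(2)\qquad \mathcal{T}\times\otimes^{d-1}\mathbf{x}=-\mathbf{x},\quad \mathbf{x}\neq\mathbf{0}$$ is the negative of a real solution of (1). If $d$ is even, then the systems (1) and (2) together have at most $\frac{2((d-1)^n-1)}{d-2}$ real solutions, and this set of real solutions is invariant under multiplication by $-1$.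
   Context: $\mathrm{Sym}(n,d,\mathbb{C})$ is the space of complex tensors $\mathcal{T}=[t_{i_1,\ldots,i_d}]_{i_1,\ldots,i_d=1}^n$ whose entries are invariant under any permutation of indices, and $\mathrm{Sym}(n,d)\subset\mathrm{Sym}(n,d,\mathbb{C})$ is the real subspace of real such tensors. For $\mathbf{x}=(x_1,\ldots,x_n)^\top\in\mathbb{C}^n$, $\mathcal{T}\times\otimes^{d-1}\mathbf{x}\in\mathbb{C}^n$ is the vector with $i$-th coordinate $\sum_{i_2,\ldots,i_d=1}^n t_{i,i_2,\ldots,i_d}x_{i_2}\cdots x_{i_d}$ (no complex conjugation). *)

From HB Require Import structures.
From mathcomp Require Import all_boot all_order all_algebra all_fingroup.
From mathcomp Require Import reals.
From mathcomp Require Import complex.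
From mathcomp Require mpoly.

Set Implicit Arguments. Unset Strict Implicit. Unset Printing Implicit Defensive.
Import Order.TTheory GRing.Theory Num.Theory.
Local Open Scope ring_scope.

Definition midx (n d : nat) := {ffun 'I_d -> 'I_n}.

Definition tensor (K : Type) (n d : nat) := {ffun midx n d -> K}.

Definition sym_tensor (K : Type) (n d : nat) (T : tensor K n d) : Prop :=
  forall (s : 'S_d) (i : midx n d), T [ffun k => i (s k)] = T i.

(* (T x ⊗^{d-1} x)_i = sum_{i_2..i_d} t_{i,i_2,..,i_d} x_{i_2}...x_{i_d}
   (index position 0 is the free index; no conjugation). *)
Definition contr (K : comNzRingType) (n d : nat) (T : tensor K n d)
  (x : 'rV[K]_n) : 'rV[K]_n :=
  \row_(i < n) \sum_(j : midx n d | [forall k : 'I_d, (val k == 0%N) ==> (j k == i)])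
     (T j * \prod_(k : 'I_d | val k != 0%N) x 0 (j k)).

Definition sol1 (K : comNzRingType) (n d : nat) (T : tensor K n d) (x : 'rV[K]_n) : Prop :=
  x != 0 /\ contr T x = x.

Definition sol2 (K : comNzRingType) (n d : nat) (T : tensor K n d) (x : 'rV[K]_n) : Prop :=
  x != 0 /\ contr T x = - x.

(* Polynomials in the coordinates (entries) of Sym(n,d,C) ⊂ C^{n^d}:
   variable number v corresponds to the entry indexed by enum_val v. *)
Definition coordpoly (K : comNzRingType) (n d : nat) :=
  mpoly.mpoly #|{: midx n d}| K.

Definition peval (K : comNzRingType) (n d : nat) (p : coordpoly K n d)
  (T : tensor K n d) : K :=
  mpoly.meval (fun v : 'I_#|{: midx n d}| => T (enum_val v)) p.

Definition in_variety (K : comNzRingType) (n d : nat) (ps : seq (coordpoly K n d))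
  (T : tensor K n d) : Prop :=
  sym_tensor T /\ all (fun p => peval p T == 0) ps.

Definition proper_variety (K : comNzRingType) (n d : nat) (ps : seq (coordpoly K n d)) : Prop :=
  exists T : tensor K n d, sym_tensor T /\ ~ in_variety ps T.

Definition cplx (R : rcfType) (r : R) : R[i] := Complex r 0.

Definition ctensor (R : rcfType) (n d : nat) (T : tensor R n d) : tensor R[i] n d :=
  [ffun j => cplx (T j)].

Definition cvec (R : rcfType) (n : nat) (x : 'rV[R]_n) : 'rV[R[i]]_n :=
  map_mx (@cplx R) x.

From HB Require Import structures.
From mathcomp Require Import all_boot all_order all_algebra all_fingroup all_solvable all_field.
From mathcomp Require Import reals.
From mathcomp Require Import complex.
From mathcomp Require Import mpoly.
From mathcomp Require Import zify.
Import Order.TTheory GRing.Theory Num.Theory.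
Local Open Scope ring_scope.
Set Implicit Arguments. Unset Strict Implicit. Unset Printing Implicit Defensive.

(* Fixed points of [x |-> T x^{d-1}] are common zeros of the degree-[D] Macaulay matrix of the
   system, whose rows are the polynomials [x^a ((T x^{d-1})_i - x_i)].  Lagrange interpolation
   makes the monomial-evaluation vectors of [N <= D] distinct points independent, so [N] fixed
   points force corank at least [N].  For the diagonal tensor ([x_i^{d-1} = x_i]) every monomial
   reduces modulo the rows to one of the [(d-1)^n] monomials with all exponents below [d-1], so
   the corank is at most [(d-1)^n]; a nonzero maximal minor, read as a polynomial in the entries
   of [T], cuts out [Sigma], off which the corank stays at most [(d-1)^n].  Taking
   [D = (d-1)^n + 1] and counting [0] gives at most [(d-1)^n - 1] nonzero fixed points.
   By homogeneity the solutions are stable under the [(d-2)]-th roots of unity; a root of unity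
   that is a ratio of two real vectors is [1] or [-1], so the orbits of distinct real solutions are
   disjoint, and for even [d] an odd power of a primitive [2(d-2)]-th root of unity turns a real
   solution of (2) into a solution of (1). *)

Section Homogeneity.
Variables (K : comNzRingType) (n d : nat) (T : tensor K n d).

Lemma card_ord_neq0 : (0 < d)%N -> #|[pred k : 'I_d | val k != 0%N]| = d.-1.
Proof.
case: d => [//|d'] _; transitivity #|predC1 (@ord0 d')|.
  by apply: eq_card => k; rewrite !inE.
by rewrite cardC1 card_ord.
Qed.

Lemma contrZ (a : K) (x : 'rV[K]_n) :
  (0 < d)%N -> contr T (a *: x) = a ^+ d.-1 *: contr T x.
Proof.
move=> d_gt0; apply/rowP => i; rewrite !mxE mulr_sumr; apply: eq_bigr => j _.
rewrite mulrCA; congr (_ * _); under eq_bigr => k _ do rewrite mxE.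
by rewrite big_split /= prodr_const card_ord_neq0.
Qed.

Lemma contrN (x : 'rV[K]_n) : (0 < d)%N -> contr T (- x) = (-1) ^+ d.-1 *: contr T x.
Proof. by move=> d_gt0; rewrite -scaleN1r contrZ. Qed.

Lemma contr0 : (1 < d)%N -> contr T 0 = 0.
Proof.
move=> d_gt1; rewrite -(scale0r 0) contrZ ?(ltnW d_gt1) //.
by rewrite expr0n -subn1 subn_eq0 leqNgt d_gt1 !scale0r.
Qed.

Lemma contrZ_fixed (x : 'rV[K]_n) (c u : K) :
  (2 < d)%N -> contr T x = c *: x -> u ^+ (d - 2) * c = 1 ->
  contr T (u *: x) = u *: x.
Proof.
move=> d_gt2 Tx uc; rewrite contrZ ?(ltnW (ltnW d_gt2)) // Tx scalerA.
have -> : d.-1 = (d - 2).+1 by lia.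
by rewrite exprSr mulrAC uc mul1r.
Qed.

End Homogeneity.

Lemma sol1Z (K : fieldType) n d (T : tensor K n d) x (z : K) :
  (2 < d)%N -> sol1 T x -> z ^+ (d - 2) = 1 -> sol1 T (z *: x).
Proof.
move=> d_gt2 [x_neq0 Tx] zd; split.
  rewrite scaler_eq0 negb_or x_neq0 andbT; apply/eqP => z0.
  have d2_neq0 : (d - 2 == 0)%N = false by apply/eqP; lia.
  by move: zd; rewrite z0 expr0n d2_neq0 => /eqP; rewrite eq_sym oner_eq0.
by apply: (contrZ_fixed (c := 1)); rewrite ?scale1r ?mulr1.
Qed.

Section Monomials.
Variables (K : comNzRingType) (n d : nat).

Definition mnm_eval (x : 'rV[K]_n) (b : 'X_{1..n}) : K := \prod_(l < n) x 0 l ^+ b l.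

Definition tail_mnm (j : midx n d) : 'X_{1..n} :=
  [multinom #|[pred k : 'I_d | (val k != 0%N) && (j k == l)]| | l < n].

Definition midx_head (i : 'I_n) (j : midx n d) :=
  [forall k : 'I_d, (val k == 0%N) ==> (j k == i)].

Lemma mnm_evalD x a b : mnm_eval x (a + b)%MM = mnm_eval x a * mnm_eval x b.
Proof. by rewrite -big_split; apply: eq_bigr => l _; rewrite mnmDE exprD. Qed.

Lemma mnm_evalU x i : mnm_eval x U_(i)%MM = x 0 i.
Proof.
rewrite /mnm_eval (bigD1 i) //= mnm1E eqxx expr1 big1 ?mulr1 // => l /negPf.
by rewrite mnm1E eq_sym => ->.
Qed.

Lemma mnm_eval_tail x j :
  mnm_eval x (tail_mnm j) = \prod_(k : 'I_d | val k != 0%N) x 0 (j k).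
Proof.
rewrite (partition_big j predT) //=; apply: eq_bigr => l _; rewrite mnmE.
transitivity (\prod_(k in [pred k : 'I_d | (val k != 0%N) && (j k == l)]) x 0 l).
  by rewrite prodr_const.
by apply: eq_big => k; rewrite ?inE // => /andP [_ /eqP ->].
Qed.

Lemma mdeg_tail_mnm j : (0 < d)%N -> mdeg (tail_mnm j) = d.-1.
Proof.
move=> d_gt0; rewrite mdegE -card_ord_neq0 // -sum1_card.
rewrite (partition_big j predT) //=; apply: eq_bigr => l _.
by rewrite mnmE -sum1_card.
Qed.

Lemma contr_mnm T x i :
  contr T x 0 i = \sum_(j | midx_head i j) T j * mnm_eval x (tail_mnm j).
Proof. by rewrite mxE; apply: eq_bigr => j _; rewrite mnm_eval_tail. Qed.

(* The coefficient of [x^b] in the polynomial [x^a ((T x^{d-1})_i - x_i)]. *)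
Definition mac_coef (T : tensor K n d) (a : 'X_{1..n}) (i : 'I_n) (b : 'X_{1..n}) : K :=
  \sum_(j | midx_head i j && ((a + tail_mnm j)%MM == b)) T j
  - (b == (a + U_(i))%MM)%:R.

Lemma sum_bmnm_pick D (F : 'X_{1..n} -> K) (b : 'X_{1..n}) : (mdeg b < D.+1)%N ->
  \sum_(c : 'X_{1..n < D.+1}) (if b == val c then F (val c) else 0) = F b.
Proof.
move=> b_lt; rewrite (bigD1 (BMultinom b_lt)) //= eqxx big1 ?addr0 // => c c_neq.
by case: eqP => // b_eq; case/negP: c_neq; apply/eqP/val_inj.
Qed.

Lemma sum_mac_coef D T x a i : (1 < d)%N -> (mdeg a + d.-1 <= D)%N ->
  \sum_(c : 'X_{1..n < D.+1}) mac_coef T a i c * mnm_eval x c =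
  mnm_eval x a * (contr T x 0 i - x 0 i).
Proof.
move=> d_gt1 deg_a; have d_gt0 := ltnW d_gt1.
have deg_U : (mdeg a + 1 <= D)%N by apply: leq_trans deg_a; rewrite leq_add2l; lia.
under eq_bigr => c _ do rewrite mulrBl.
rewrite sumrB mulrBr; congr (_ - _); last first.
  under eq_bigr => c _ do rewrite mulr_natl mulrb eq_sym.
  by rewrite (sum_bmnm_pick (mnm_eval x)) ?mdegD ?mdeg1 ?ltnS // mnm_evalD mnm_evalU.
rewrite contr_mnm mulr_sumr.
under eq_bigr => c _ do rewrite big_distrl /= big_mkcondr /=.
rewrite exchange_big /=; apply: eq_bigr => j _.
rewrite (sum_bmnm_pick (fun c => T j * mnm_eval x c)); first by rewrite mnm_evalD mulrCA.
by rewrite mdegD mdeg_tail_mnm // ltnS.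
Qed.

End Monomials.

Section Macaulay.
Variables (K : comNzRingType) (n d D : nat).

Local Notation Mon := 'X_{1..n < D.+1}.
Local Notation Row := ('X_{1..n < (D - d.-1).+1} * 'I_n)%type.

Definition Mac (T : tensor K n d) : 'M[K]_(#|{: Row}|, #|{: Mon}|) :=
  \matrix_(r, c) mac_coef T (val (enum_val r).1) (enum_val r).2 (val (enum_val c)).

Lemma Mac_sol1 (T : tensor K n d) (x : 'rV[K]_n) r :
  (1 < d)%N -> (d.-1 <= D)%N -> contr T x = x ->
  \sum_c Mac T r c * mnm_eval x (val (enum_val c)) = 0.
Proof.
move=> d_gt1 dD Tx; under eq_bigr => c _ do rewrite mxE.
rewrite -(big_enum_val (fun c : Mon =>
  mac_coef T (val (enum_val r).1) (enum_val r).2 (val c) * mnm_eval x (val c))) /=.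
rewrite sum_mac_coef ?Tx ?subrr ?mulr0 //.
by rewrite addnC -leq_subRL // -ltnS bmdeg.
Qed.

End Macaulay.

Section RankLemmas.
Variable K : fieldType.

Lemma rank_add_le p q N (A : 'M[K]_(p, q)) (E : 'M[K]_(q, N)) (C : 'M[K]_(N, q)) :
  A *m E = 0 -> C *m E = 1%:M -> (\rank A + N <= q)%N.
Proof.
move=> AE0 CE1.
have rkA : (\rank A <= q - \rank E)%N.
  by rewrite -mxrank_ker mxrankS // sub_kermx AE0.
have rkE : (N <= \rank E)%N by rewrite -{1}(mxrank1 K N) -CE1 mxrankM_maxr.
by apply: leq_trans (leq_add rkA rkE) _; rewrite subnK ?rank_leq_row.
Qed.

Lemma minor_neq0_rank p q r (A : 'M[K]_(p, q)) (f : 'I_r -> 'I_p) (g : 'I_r -> 'I_q) :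
  \det (colsub g (rowsub f A)) != 0 -> (r <= \rank A)%N.
Proof.
rewrite -unitfE -unitmxE => /mxrank_unit <-.
apply: leq_trans (_ : \rank (rowsub f A) <= _)%N; last by rewrite rowsubE mxrankM_maxr.
by rewrite -mxrank_tr trmx_mxsub -[X in (_ <= X)%N]mxrank_tr rowsubE mxrankM_maxr.
Qed.

Lemma exists_minor_rank p q (A : 'M[K]_(p, q)) :
  exists f : 'I_(\rank A) -> 'I_p, exists g : 'I_(\rank A) -> 'I_q,
    \det (colsub g (rowsub f A)) != 0.
Proof.
have full : row_full (rowsub (maxrankfun A) A)^T.
  by rewrite /row_full mxrank_tr; exact: maxrowsub_free.
exists (maxrankfun A), (fullrankfun full).
by have := fullrowsub_unit full; rewrite -trmx_mxsub unitmxE det_tr unitfE.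
Qed.

End RankLemmas.

Section Interpolation.
Variables (K : fieldType) (n D : nat).
Local Notation Mon := 'X_{1..n < D.+1}.

Definition mev (x : 'rV[K]_n) (p : {mpoly K[n]}) : K := p.@[fun l => x 0 l].

Definition separating (x y : 'rV[K]_n) : {mpoly K[n]} :=
  if [pick l | x 0 l != y 0 l] is Some l then 'X_l - (y 0 l)%:MP else 1.

Lemma separating_root x y : x != y -> mev y (separating x y) = 0.
Proof.
rewrite /separating /mev; case: pickP => [l _|xy] x_neq_y.
  by rewrite mevalB mevalXU mevalC subrr.
case/eqP: x_neq_y; apply/rowP => i; apply/eqP.
by have := xy i; rewrite /= => /negbFE.
Qed.

Lemma separating_neq0 x y : mev x (separating x y) != 0.
Proof.
rewrite /separating /mev; case: pickP => [l|_].
  by rewrite mevalB mevalXU mevalC subr_eq0.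
by rewrite meval1 oner_neq0.
Qed.

Lemma msize_separating x y : (msize (separating x y) <= 2)%N.
Proof.
rewrite /separating; case: pickP => [l _|_]; last by rewrite msize1.
apply: leq_trans (msizeD_le _ _) _.
by rewrite msizeN msizeX mdeg1 geq_max leqnn msizeC; case: (_ != 0).
Qed.

Lemma msize_prod_affine (I : Type) (r : seq I) (P : pred I) (F : I -> {mpoly K[n]}) :
  (forall i, msize (F i) <= 2)%N -> (msize (\prod_(i <- r | P i) F i) <= (size r).+1)%N.
Proof.
move=> F_le; elim: r => [|a r IH]; first by rewrite big_nil msize1.
rewrite big_cons /=; case: (P a); last exact: leq_trans IH _.
have [->|Fa_neq0] := eqVneq (F a) 0; first by rewrite mul0r msize0.
have [->|Fr_neq0] := eqVneq (\prod_(i <- r | P i) F i) 0; first by rewrite mulr0 msize0.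
rewrite msizeM // -subn1 leq_subLR add1n; apply: leq_trans (leq_add (F_le a) IH) _.
by rewrite addnS add2n.
Qed.

Lemma mev_mnm_sum x (p : {mpoly K[n]}) : (msize p <= D.+1)%N ->
  mev x p = \sum_(c : Mon) p@_c * mnm_eval x c.
Proof.
move=> p_small; rewrite /mev {1}(mpolywE p_small) raddf_sum.
by apply: eq_bigr => c _ /=; rewrite mevalZ mevalX.
Qed.

Variables (N : nat) (pt : 'I_N -> 'rV[K]_n).
Hypothesis pt_inj : injective pt.
Hypothesis N_le_D : (N <= D)%N.

Definition lagrange (k : 'I_N) : {mpoly K[n]} :=
  \prod_(k' < N | k' != k) separating (pt k) (pt k').

Lemma msize_lagrange k : (msize (lagrange k) <= D.+1)%N.
Proof.
apply: leq_trans (msize_prod_affine _ _ (fun _ => msize_separating _ _)) _.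
by rewrite [index_enum _]unlock -enumT size_enum_ord ltnS.
Qed.

Lemma mev_lagrange k k' : k' != k -> mev (pt k') (lagrange k) = 0.
Proof.
move=> k'_neq; have pt_neq : pt k != pt k' by apply: contra k'_neq => /eqP/pt_inj ->.
have := separating_root pt_neq.
by rewrite /mev /lagrange rmorph_prod (bigD1 k') //= => ->; rewrite mul0r.
Qed.

Lemma mev_lagrange_neq0 k : mev (pt k) (lagrange k) != 0.
Proof. by rewrite /mev /lagrange rmorph_prod; apply/prodf_neq0 => k' _; apply: separating_neq0. Qed.

Definition eval_mx : 'M[K]_(#|{: Mon}|, N) :=
  \matrix_(c, k) mnm_eval (pt k) (val (enum_val c)).

Definition lagrange_mx : 'M[K]_(N, #|{: Mon}|) :=
  \matrix_(k, c) ((mev (pt k) (lagrange k))^-1 * (lagrange k)@_(val (enum_val c))).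

Lemma lagrange_mxK : lagrange_mx *m eval_mx = 1%:M.
Proof.
apply/matrixP => k k'; rewrite !mxE.
under eq_bigr => c _ do rewrite !mxE -mulrA.
rewrite -mulr_sumr -(big_enum_val (fun c : Mon => (lagrange k)@_c * mnm_eval (pt k') c)).
rewrite -mev_mnm_sum ?msize_lagrange //.
have [->|k'_neq] := eqVneq k' k; first by rewrite mulVf ?mev_lagrange_neq0.
by rewrite (mev_lagrange k'_neq) mulr0.
Qed.

End Interpolation.

Lemma sol1_count_of_rank (K : fieldType) (n d : nat) (T : tensor K n d) :
  (2 < d)%N -> (0 < n)%N ->
  (#|{: 'X_{1..n < ((d.-1) ^ n).+2}}| <= \rank (Mac ((d.-1) ^ n).+1 T) + (d.-1) ^ n)%N ->
  forall s, uniq s -> (forall x, x \in s -> sol1 T x) -> (size s <= (d.-1) ^ n - 1)%N.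
Proof.
set M := ((d.-1) ^ n)%N => d_gt2 n_gt0 rkMac s s_uniq s_sol.
have M_gt0 : (0 < M)%N by rewrite expn_gt0; apply/orP; left; lia.
rewrite leqNgt; apply/negP => s_big; have M_le_s : (M <= size s)%N by lia.
pose pt (k : 'I_M.+1) : 'rV[K]_n := nth 0 (0 :: s) k.
have ord_lt (k : 'I_M.+1) : (k < size ((0%R : 'rV[K]_n) :: s))%N.
  by rewrite /= ltnS (leq_trans _ M_le_s) // -ltnS.
have pt_mem k : pt k \in 0 :: s by rewrite mem_nth.
have pt_inj : injective pt.
  have uniq0s : uniq (0 :: s) by rewrite /= s_uniq andbT; apply/negP => /s_sol [] /eqP.
  by move=> k k' /eqP; rewrite /pt nth_uniq // => /eqP/val_inj.
have pt_sol k : contr T (pt k) = pt k.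
  by have := pt_mem k; rewrite in_cons => /orP [/eqP ->|/s_sol [] //]; rewrite contr0 //; lia.
have dM : (d.-1 <= M.+1)%N.
  by apply: leqW; rewrite -{1}(expn1 d.-1); apply: leq_pexp2l; lia.
have MacE0 : Mac M.+1 T *m eval_mx M.+1 pt = 0.
  apply/matrixP => r k; rewrite [RHS]mxE -(Mac_sol1 r _ dM (pt_sol k)); last by lia.
  by rewrite mxE; apply: eq_bigr => c _; rewrite [eval_mx _ _ _ _]mxE.
have := leq_trans (rank_add_le MacE0 (lagrange_mxK pt_inj (leqnn _))) rkMac.
by rewrite addnS ltnn.
Qed.

Lemma enum_val_eq (I : finType) (c : 'I_#|{: I}|) (b : I) :
  (enum_val c == b) = (c == enum_rank b).
Proof. by rewrite -(inj_eq enum_rank_inj (enum_val c)) enum_valK. Qed.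

Section DiagonalTensor.
Variables (K : fieldType) (n d D : nat).
Hypothesis d_gt2 : (2 < d)%N.
Hypothesis dD : (d.-1 <= D)%N.

Local Notation Mon := 'X_{1..n < D.+1}.
Local Notation Row := ('X_{1..n < (D - d.-1).+1} * 'I_n)%type.

Let d_gt0 : (0 < d)%N. Proof. exact: leq_trans d_gt2. Qed.

Definition const_midx (i : 'I_n) : midx n d := [ffun _ => i].

(* The tensor of the system [x_i^{d-1} = x_i]. *)
Definition diag_tensor : tensor K n d :=
  [ffun j : midx n d => ([forall k1, forall k2, j k1 == j k2] : bool)%:R].

Lemma diag_tensor_sym : sym_tensor diag_tensor.
Proof.
move=> s i; rewrite !ffunE; congr ((_ : bool)%:R).
apply/forallP/forallP => j_const k1; apply/forallP => k2.
  by have /forallP/(_ (s^-1 k2)%g) := j_const (s^-1 k1)%g; rewrite !ffunE !permKV.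
by have /forallP/(_ (s k2)) := j_const (s k1); rewrite !ffunE.
Qed.

Lemma midx_head_const i : midx_head i (const_midx i).
Proof. by apply/forallP => k; rewrite ffunE eqxx implybT. Qed.

Lemma diag_tensor_head i j : midx_head i j -> diag_tensor j = (j == const_midx i)%:R.
Proof.
move=> /forallP j_head; rewrite ffunE; congr ((_ : bool)%:R).
have j0 : j (Ordinal d_gt0) = i by apply/eqP; have := j_head (Ordinal d_gt0); rewrite eqxx.
apply/forallP/eqP => [j_const|->]; last by move=> k1; apply/forallP => k2; rewrite !ffunE.
by apply/ffunP => k; rewrite ffunE -j0; have /forallP/(_ (Ordinal d_gt0))/eqP := j_const k.
Qed.

Lemma tail_mnm_const i l : tail_mnm (const_midx i) l = if i == l then d.-1 else 0%N.
Proof.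
rewrite mnmE; case: eqP => [->|i_neq_l].
  by rewrite -card_ord_neq0 //; apply: eq_card => k; rewrite !inE ffunE eqxx andbT.
by apply: eq_card0 => k; rewrite !inE ffunE (introF eqP i_neq_l) andbF.
Qed.

Lemma mac_coef_diag a i b :
  mac_coef diag_tensor a i b =
  (b == (a + tail_mnm (const_midx i))%MM)%:R - (b == (a + U_(i))%MM)%:R.
Proof.
rewrite /mac_coef (eq_bigr (fun j => (j == const_midx i)%:R)); last first.
  by move=> j /andP [j_head _]; rewrite (diag_tensor_head j_head).
rewrite big_mkcond (bigD1 (const_midx i)) //= eqxx midx_head_const eq_sym.
rewrite big1 ?addr0; first by case: (b == _).
by move=> j /negPf ->; rewrite if_same.
Qed.

Definition low_mnm (f : {ffun 'I_n -> 'I_(d.-1)}) : 'X_{1..n} := [multinom val (f l) | l < n].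

Definition low_mx : 'M[K]_(#|{: {ffun 'I_n -> 'I_(d.-1)}}|, #|{: Mon}|) :=
  \matrix_(r, c) (val (enum_val c) == low_mnm (enum_val r))%:R.

Local Notation delta b := (delta_mx (0 : 'I_1) (enum_rank b)).

Lemma delta_low_sub (b : Mon) : (forall l, b l < d.-1)%N -> (delta b <= low_mx)%MS.
Proof.
move=> b_low; pose f := [ffun l => Ordinal (b_low l)].
have -> : delta b = row (enum_rank f) low_mx.
  apply/rowP => c; rewrite !mxE enum_rankK.
  have -> : low_mnm f = val b by apply/mnmP => l; rewrite mnmE ffunE.
  by rewrite val_eqE enum_val_eq.
exact: row_sub.
Qed.

(* The row [x^a (x_l^{d-1} - x_l)] with [x^a x_l^{d-1} = x^b] trades [x^b] for a monomial of
   lower degree. *)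
Lemma Mac_diag_row (b : Mon) l : (d.-1 <= b l)%N ->
  exists r : 'I_#|{: Row}|, exists b' : Mon,
    (mdeg b' < mdeg b)%N /\ row r (Mac D diag_tensor) = delta b - delta b'.
Proof.
move=> b_high; have tail_le : (tail_mnm (const_midx l) <= val b)%MM.
  by apply/mnm_lepP => l'; rewrite tail_mnm_const; case: eqP => [<-|].
set a := (val b - tail_mnm (const_midx l))%MM.
have a_tail : (a + tail_mnm (const_midx l))%MM = val b by rewrite submK.
have deg_a : (mdeg a + d.-1 = mdeg b)%N.
  by rewrite -(mdeg_tail_mnm (const_midx l) d_gt0) -mdegD a_tail.
have deg_b := bmdeg b.
have a_small : (mdeg a < (D - d.-1).+1)%N by lia.
have b'_small : (mdeg (a + U_(l))%MM < D.+1)%N by rewrite mdegD mdeg1; lia.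
exists (enum_rank ((BMultinom a_small, l) : Row)), (BMultinom b'_small); split.
  by rewrite /= mdegD mdeg1; lia.
apply/rowP => c; rewrite !mxE enum_rankK /= mac_coef_diag a_tail.
have -> : (val (enum_val c) == (a + U_(l))%MM) = (c == enum_rank (BMultinom b'_small)).
  by rewrite -enum_val_eq -val_eqE.
by rewrite val_eqE enum_val_eq.
Qed.

Lemma delta_sub_Mac_low (b : Mon) : (delta b <= Mac D diag_tensor + low_mx)%MS.
Proof.
have [k] := ubnP (mdeg b); elim: k b => // k IH b deg_b.
have [/existsP [l b_high] | /existsPn b_low] := boolP [exists l, d.-1 <= b l]%N.
  have [r [b' [deg_b' row_r]]] := Mac_diag_row b_high.
  rewrite -(subrK (delta b') (delta b)) -row_r.
  apply: addmx_sub; first exact: submx_trans (row_sub _ _) (addsmxSl _ _).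
  by apply: IH; lia.
apply: submx_trans (delta_low_sub _) (addsmxSr _ _) => l.
by rewrite ltnNge; apply: b_low.
Qed.

Lemma rank_Mac_diag : (#|{: Mon}| <= \rank (Mac D diag_tensor) + (d.-1) ^ n)%N.
Proof.
have full : (1%:M <= Mac D diag_tensor + low_mx)%MS.
  by apply/row_subP => c; rewrite row1 -[c]enum_valK; apply: delta_sub_Mac_low.
have := mxrankS full; rewrite mxrank1 => /leq_trans; apply.
apply: leq_trans (mxrank_adds_leqif _ _).1 _; rewrite leq_add2l.
by apply: leq_trans (rank_leq_row _) _; rewrite card_ffun !card_ord.
Qed.

End DiagonalTensor.

Section MacaulayPoly.
Variables (K : comNzRingType) (n d D : nat).

Local Notation Mon := 'X_{1..n < D.+1}.
Local Notation Row := ('X_{1..n < (D - d.-1).+1} * 'I_n)%type.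

Definition mac_coef_poly (a : 'X_{1..n}) (i : 'I_n) (b : 'X_{1..n}) : coordpoly K n d :=
  \sum_(j | midx_head i j && ((a + tail_mnm j)%MM == b)) 'X_(enum_rank j)
  - (b == (a + U_(i))%MM)%:R.

Definition Mac_poly : 'M[coordpoly K n d]_(#|{: Row}|, #|{: Mon}|) :=
  \matrix_(r, c) mac_coef_poly (val (enum_val r).1) (enum_val r).2 (val (enum_val c)).

Lemma map_Mac_poly (T : tensor K n d) :
  map_mx (meval (fun v => T (enum_val v))) Mac_poly = Mac D T.
Proof.
apply/matrixP => r c; rewrite !mxE /mac_coef_poly rmorphB rmorph_sum /= rmorph_nat.
by congr (_ - _); apply: eq_bigr => j _; rewrite mevalXU enum_rankK.
Qed.

Definition Mac_minor r (f : 'I_r -> 'I_#|{: Row}|) (g : 'I_r -> 'I_#|{: Mon}|) :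
  coordpoly K n d := \det (colsub g (rowsub f Mac_poly)).

Lemma peval_Mac_minor r f g (T : tensor K n d) :
  peval (@Mac_minor r f g) T = \det (colsub g (rowsub f (Mac D T))).
Proof. by rewrite /peval /Mac_minor -det_map_mx !map_mxsub map_Mac_poly. Qed.

End MacaulayPoly.

Section Sigma.
Variables (K : fieldType) (n d : nat).
Hypotheses (n_gt0 : (0 < n)%N) (d_gt2 : (2 < d)%N).

Local Notation D := ((d.-1) ^ n).+1.
Local Notation Mac0 := (Mac D (diag_tensor K n d)).

Variables (f : 'I_(\rank Mac0) -> 'I_#|{: ('X_{1..n < (D - d.-1).+1} * 'I_n)%type}|)
          (g : 'I_(\rank Mac0) -> 'I_#|{: 'X_{1..n < D.+1}}|).
Hypothesis minor_diag : \det (colsub g (rowsub f Mac0)) != 0.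

Local Notation Sigma := (@Mac_minor K n d D _ f g).

Lemma Mac_minor_proper : proper_variety [:: Sigma].
Proof.
exists (diag_tensor K n d); split; first exact: diag_tensor_sym.
by case=> _ /=; rewrite andbT peval_Mac_minor (negPf minor_diag).
Qed.

Lemma sol1_count_off_Mac_minor (T : tensor K n d) :
  sym_tensor T -> ~ in_variety [:: Sigma] T ->
  forall s, uniq s -> (forall x, x \in s -> sol1 T x) -> (size s <= (d.-1) ^ n - 1)%N.
Proof.
move=> T_sym T_off; apply: sol1_count_of_rank => //.
have minor_T : \det (colsub g (rowsub f (Mac D T))) != 0.
  by rewrite -peval_Mac_minor; apply: contra_not_neq T_off => /eqP T_on; split; rewrite //= T_on.
have dD : (d.-1 <= D)%N by apply: leqW; rewrite -{1}(expn1 d.-1); apply: leq_pexp2l; lia.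
apply: leq_trans (@rank_Mac_diag K n d D d_gt2 dD) _; rewrite leq_add2r.
exact: minor_neq0_rank minor_T.
Qed.

End Sigma.

Lemma prim_root_exists (F : numClosedFieldType) (k : nat) :
  (0 < k)%N -> {z : F | k.-primitive_root z}.
Proof.
move=> k_gt0; have [r Xk1] := closed_field_poly_normal ('X^k - 1 : {poly F}).
rewrite (monicP (monicXnsubC 1 k_gt0)) scale1r in Xk1.
have r_roots : all k.-unity_root r by apply/allP => z; rewrite -root_prod_XsubC -Xk1.
have size_r : (k < (size r).+1)%N by rewrite -(size_prod_XsubC r id) -Xk1 size_XnsubC.
apply/sigW; have [|z _ z_prim] := hasP (has_prim_root k_gt0 r_roots _ size_r); last by exists z.
by rewrite -separable_prod_XsubC -Xk1 separable_Xn_sub_1 // pnatr_eq0 -lt0n.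
Qed.

Lemma prim_root_half (F : fieldType) (m : nat) (w : F) :
  (2 * m).-primitive_root w -> w ^+ m = -1.
Proof.
move=> w_prim; have m_gt0 : (0 < m)%N by have := prim_order_gt0 w_prim; lia.
have /eqP : (w ^+ m) ^+ 2 = 1 by rewrite -exprM mulnC prim_expr_order.
rewrite sqrf_eq1 => /orP [/eqP wm1|/eqP //].
by have := prim_order_dvd w_prim m; rewrite wm1 eqxx => /(dvdn_leq m_gt0); lia.
Qed.

Lemma allpairs_count_le (S T U : eqType) (P : U -> Prop) (B : nat) (f : S -> T -> U) s t :
  (forall u, uniq u -> (forall y, y \in u -> P y) -> (size u <= B)%N) ->
  uniq s -> uniq t -> (forall x y, x \in s -> y \in t -> P (f x y)) ->
  (forall x y x' y', x \in s -> y \in t -> x' \in s -> y' \in t ->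
     f x y = f x' y' -> x = x' /\ y = y') ->
  (size s * size t <= B)%N.
Proof.
move=> count_P s_uniq t_uniq fP f_inj; rewrite -(size_allpairs f); apply: count_P.
  apply: allpairs_uniq => // -[x y] [x' y'] /allpairsP [[a b] /= [a_s b_t [-> ->]]].
  by case/allpairsP => [[a' b'] /= [a'_s b'_t [-> ->]]] /(f_inj _ _ _ _ a_s b_t a'_s b'_t) [-> ->].
by move=> _ /allpairsP [[x y] /= [x_s y_t ->]]; apply: fP.
Qed.

Section RealVectors.
Variables (R : rcfType) (n : nat).

Lemma cvecE (x : 'rV[R]_n) : cvec x = map_mx (real_complex R) x.
Proof. by []. Qed.

Lemma cvecN (x : 'rV[R]_n) : cvec (- x) = - cvec x.
Proof. by rewrite !cvecE map_mxN. Qed.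

Lemma cvec_inj : injective (@cvec R n).
Proof. by move=> x y; rewrite !cvecE; apply: map_mx_inj; apply: complexI. Qed.

Lemma cvec_eq0 (x : 'rV[R]_n) : (cvec x == 0) = (x == 0).
Proof. by rewrite -(inj_eq cvec_inj) [cvec 0]cvecE map_mx0. Qed.

Lemma real_root1 (r : R) (N : nat) : (0 < N)%N -> r ^+ N = 1 -> r = 1 \/ r = -1.
Proof.
move=> N_gt0 rN; have /eqP : `|r| ^+ N = 1 by rewrite -normrX rN normr1.
rewrite pexpr_eq1 // => /eqP; case: (ger0P r) => [_ ->|_ /eqP]; first by left.
by rewrite eqr_oppLR => /eqP; right.
Qed.

Lemma scale_cvec_roots_eq (N : nat) (u v : R[i]) (x y : 'rV[R]_n) :
  (0 < N)%N -> u ^+ N = 1 -> v ^+ N = 1 -> x != 0 -> u *: cvec x = v *: cvec y ->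
  (u = v /\ y = x) \/ (u = - v /\ y = - x).
Proof.
move=> N_gt0 uN vN x_neq0 uxvy.
have [l xl_neq0] : exists l, x 0 l != 0.
  apply/existsP; apply: contraR x_neq0 => /existsPn x0; apply/eqP/rowP => l.
  by apply/eqP; rewrite mxE; move/negbNE: (x0 l).
have v_neq0 : v != 0.
  by apply/eqP => v0; move/eqP: vN; rewrite v0 expr0n eqn0Ngt N_gt0 eq_sym oner_eq0.
have cxl_neq0 : real_complex R (x 0 l) != 0 by rewrite fmorph_eq0.
pose r := y 0 l / x 0 l.
have u_vr : u = v * real_complex R r.
  have := congr1 (fun z : 'rV[R[i]]_n => z 0 l) uxvy; rewrite /= !cvecE !mxE => uv_l.
  by rewrite fmorph_div mulrA -uv_l mulfK.
have /real_root1 [//|r1|rN1] : r ^+ N = 1.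
  apply: (@complexI R); rewrite rmorphXn rmorph1 /=.
  by apply: (mulfI (expf_neq0 N v_neq0)); rewrite -exprMn -u_vr uN vN mulr1.
- have uv : u = v by rewrite u_vr r1 rmorph1 mulr1.
  left; split => //; apply: cvec_inj; apply: (scalerI v_neq0).
  by rewrite -uxvy uv.
- have uv : u = - v by rewrite u_vr rN1 rmorphN rmorph1 mulrN1.
  right; split => //; apply: cvec_inj; apply: (scalerI v_neq0).
  by rewrite -uxvy uv cvecN scalerN scaleNr.
Qed.

End RealVectors.

Lemma oppv_eq_self (F : numFieldType) (V : lmodType F) (v : V) : (- v == v) = (v == 0).
Proof.
apply/eqP/eqP => [Nv|->]; last by rewrite oppr0.
have /eqP : 2%:R *: v = 0 by rewrite scaler_nat mulr2n -{1}Nv addNr.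
by rewrite scaler_eq0 pnatr_eq0 => /eqP.
Qed.

Section RealSolutions.
Variables (R : rcfType) (n d : nat) (T : tensor R[i] n d).
Hypothesis d_gt2 : (2 < d)%N.

Lemma sol2_neg_odd (x : 'rV[R]_n) : odd d ->
  sol2 T (cvec x) -> exists y : 'rV[R]_n, sol1 T (cvec y) /\ x = - y.
Proof.
move=> d_odd [x_neq0 Tx]; exists (- x); rewrite opprK; split => //.
have d1_even : odd d.-1 = false by lia.
rewrite /sol1 cvecN oppr_eq0 contrN; last by lia.
by rewrite Tx -signr_odd d1_even scale1r.
Qed.

Lemma sol12_neg_even (x : 'rV[R]_n) : ~~ odd d ->
  sol1 T (cvec x) \/ sol2 T (cvec x) -> sol1 T (cvec (- x)) \/ sol2 T (cvec (- x)).
Proof.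
move=> d_even; have d1_odd : odd d.-1 by lia.
have TN : contr T (- cvec x) = - contr T (cvec x).
  by rewrite contrN; [rewrite -signr_odd d1_odd scaleN1r | lia].
rewrite cvecN /sol1 /sol2 !oppr_eq0 TN opprK.
by case=> -[x_neq0 Tx]; [left|right]; rewrite Tx ?opprK.
Qed.

Variable B : nat.
Hypothesis count_sol1 :
  forall s, uniq s -> (forall x, x \in s -> sol1 T x) -> (size s <= B)%N.

Lemma real_sol1_count_odd : odd d ->
  forall s : seq 'rV[R]_n, uniq s -> (forall x, x \in s -> sol1 T (cvec x)) ->
  (size s <= B %/ (d - 2))%N.
Proof.
move=> d_odd s s_uniq s_sol; set m := (d - 2)%N.
have m_gt0 : (0 < m)%N by lia.
have m_odd : odd m by rewrite /m oddB ?d_odd //; lia.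
have [z z_prim] := prim_root_exists R[i] m_gt0.
have zm k : (z ^+ k) ^+ m = 1 by rewrite -exprM mulnC exprM (prim_expr_order z_prim) expr1n.
rewrite leq_divRL // mulnC -(size_iota 0 m).
apply: (allpairs_count_le (f := fun k x => z ^+ k *: cvec x) count_sol1) => //.
- exact: iota_uniq.
- by move=> k x _ /s_sol x_sol; apply: sol1Z.
move=> k x k' x'; rewrite !mem_iota !add0n => /andP [_ k_lt] /s_sol [x_neq0 _] /andP [_ k'_lt] _.
rewrite cvec_eq0 in x_neq0.
move/(scale_cvec_roots_eq m_gt0 (zm k) (zm k') x_neq0) => [[zk ->]|[zk _]].
  by move/eqP: zk; rewrite (eq_prim_root_expr z_prim) !modn_small // => /eqP.
have := zm k; rewrite zk exprNn zm mulr1 -signr_odd m_odd expr1 => /eqP.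
by rewrite lt_eqF // (lt_trans (ltrN10 _) ltr01).
Qed.

(* For even [d], a solution of (2) is moved to a solution of (1) by an odd power of a primitive
   [2(d-2)]-th root of unity [w], and of (1) by an even one; exponents below [d-2] never collide. *)
Lemma real_sol12_count_even : ~~ odd d ->
  forall s : seq 'rV[R]_n, uniq s ->
  (forall x, x \in s -> sol1 T (cvec x) \/ sol2 T (cvec x)) ->
  (size s <= (2 * B) %/ (d - 2))%N.
Proof.
move=> d_even s s_uniq s_sol; set m := (d - 2)%N.
have m_gt0 : (0 < m)%N by lia.
have w_order : (0 < 2 * m)%N by lia.
have [w w_prim] := prim_root_exists R[i] w_order.
have wm : w ^+ m = -1 := prim_root_half w_prim.
have w2m k : (w ^+ k) ^+ (2 * m) = 1.
  by rewrite -exprM mulnC exprM (prim_expr_order w_prim) expr1n.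
pose e x := contr T (cvec x) != cvec x.
have s_eig x : x \in s -> cvec x != 0 /\ contr T (cvec x) = (-1) ^+ e x *: cvec x.
  rewrite /e; case/s_sol => -[x_neq0 ->]; split => //; first by rewrite eqxx scale1r.
  by rewrite oppv_eq_self (negPf x_neq0) scaleN1r.
have m_half : m = (2 * m./2)%N by lia.
rewrite leq_divRL // [X in (_ * X)%N]m_half mulnCA leq_mul2l /= mulnC -(size_iota 0 m./2).
apply: (allpairs_count_le (f := fun k x => w ^+ (2 * k + e x) *: cvec x) count_sol1) => //.
- exact: iota_uniq.
- move=> k x _ /s_eig [x_neq0 Tx]; split.
    by rewrite scaler_eq0 negb_or x_neq0 expf_neq0 // (prim_root_eq0 w_prim); lia.
  apply: (contrZ_fixed d_gt2 Tx); rewrite -exprM -/m.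
  have -> : ((2 * k + e x) * m = 2 * m * k + m * e x)%N by lia.
  by rewrite exprD exprM (prim_expr_order w_prim) expr1n mul1r exprM wm -expr2 sqrr_sign.
move=> k x k' x'; rewrite !mem_iota !add0n => /andP [_ k_lt] /s_eig [x_neq0 _] /andP [_ k'_lt] _.
rewrite cvec_eq0 in x_neq0.
have exp_lt (k1 : nat) (y : 'rV[R]_n) : (k1 < m./2)%N -> (2 * k1 + e y < m)%N.
  by move=> k1_lt; case: (e y) => /=; lia.
have lt := exp_lt _ x k_lt; have lt' := exp_lt _ x' k'_lt.
move/(scale_cvec_roots_eq w_order (w2m _) (w2m _) x_neq0) => [[wk ->]|[wk _]].
  move/eqP: wk; rewrite (eq_prim_root_expr w_prim) !modn_small; try lia.
  by move/eqP=> exp_eq; split => //; lia.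
by move/eqP: wk; rewrite -mulN1r -wm -exprD (eq_prim_root_expr w_prim) !modn_small; lia.
Qed.

End RealSolutions.

Theorem theorem6p1 (R : realType) (n d : nat) (hn : (2 <= n)%N) (hd : (3 <= d)%N) :
  exists ps : seq (coordpoly R[i] n d),
    proper_variety ps /\
    (forall T : tensor R[i] n d, sym_tensor T -> ~ in_variety ps T ->
       (forall s : seq 'rV[R[i]]_n, uniq s -> (forall x, x \in s -> sol1 T x) ->
          (size s <= (d.-1) ^ n - 1)%N) /\
       (forall (x : 'rV[R[i]]_n) (z : R[i]), sol1 T x -> z ^+ (d - 2) = 1 ->
          sol1 T (z *: x))) /\
    (forall T : tensor R n d, sym_tensor T -> ~ in_variety ps (ctensor T) ->
       (odd d ->
          (forall s : seq 'rV[R]_n, uniq s ->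
             (forall x, x \in s -> sol1 (ctensor T) (cvec x)) ->
             (size s <= ((d.-1) ^ n - 1) %/ (d - 2))%N) /\
          (forall x : 'rV[R]_n, sol2 (ctensor T) (cvec x) ->
             exists y : 'rV[R]_n, sol1 (ctensor T) (cvec y) /\ x = - y)) /\
       (~~ odd d ->
          (forall s : seq 'rV[R]_n, uniq s ->
             (forall x, x \in s ->
                sol1 (ctensor T) (cvec x) \/ sol2 (ctensor T) (cvec x)) ->
             (size s <= (2 * ((d.-1) ^ n - 1)) %/ (d - 2))%N) /\
          (forall x : 'rV[R]_n,
             sol1 (ctensor T) (cvec x) \/ sol2 (ctensor T) (cvec x) ->
             sol1 (ctensor T) (cvec (- x)) \/ sol2 (ctensor T) (cvec (- x))))).
Proof.
have n_gt0 : (0 < n)%N by lia.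
have [f [g minor_diag]] := exists_minor_rank (Mac ((d.-1) ^ n).+1 (diag_tensor R[i] n d)).
have count_sol1 := sol1_count_off_Mac_minor n_gt0 hd minor_diag.
exists [:: @Mac_minor R[i] n d _ _ f g]; split; first exact: Mac_minor_proper.
split=> [T T_sym T_off | T T_sym T_off].
  by split=> [|x z x_sol zd]; [apply: count_sol1 | apply: sol1Z].
have cT_sym : sym_tensor (ctensor T) by move=> s j; rewrite !ffunE T_sym.
have cT_count := count_sol1 _ cT_sym T_off.
split=> [d_odd | d_even]; split.
- exact: real_sol1_count_odd.
- by move=> x; apply: sol2_neg_odd.
- exact: real_sol12_count_even.
- by move=> x; apply: sol12_neg_even.
Qed.
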